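(* Let $R$ be an associative unital division ring over a field of characteristic $0$ with a derivation $'$ (write $\varphi^{(k)}$ for the $k$-th derivative). Let $\varphi\in R$ and for $n\geq1$ put $$\Theta_n=\bigl(\varphi^{(i+j-2)}\bigr)_{1\leq i,j\leq n},\qquad \theta_n=|\Theta_n|_{nn},$$ with the convention $\theta_0^{-1}:=0$, assuming all quasideterminants involved are defined and all $\theta_n$ invertible. Then for all $n\geq1$, $$\bigl(\theta_n'\theta_n^{-1}\bigr)'=\theta_{n+1}\theta_n^{-1}-\theta_n\theta_{n-1}^{-1}.$$
   Context: For an $n\times n$ matrix $X$ over $R$, $|X|_{ij}=x_{ij}-r_i^j(X^{ij})^{-1}c_j^i$, where $X^{ij}$ is $X$ with row $i$ and column $j$ removed, $r_i^j$ is row $i$ without its $j$-th entry and $c_j^i$ is column $j$ without its $i$-th entry; for $n=1$, $|X|_{11}=x_{11}$. *)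

From HB Require Import structures.
From mathcomp Require Import all_boot all_order all_algebra.
Set Implicit Arguments. Unset Strict Implicit. Unset Printing Implicit Defensive.
Import GRing.Theory.
Local Open Scope ring_scope.

Definition minor_mx (R : Type) (n : nat) (X : 'M[R]_n.+1) (i j : 'I_n.+1) : 'M[R]_n :=
  \matrix_(a < n, b < n) X (lift i a) (lift j b).

Definition qrow (R : Type) (n : nat) (X : 'M[R]_n.+1) (i j : 'I_n.+1) : 'rV[R]_n :=
  \row_(b < n) X i (lift j b).

Definition qcol (R : Type) (n : nat) (X : 'M[R]_n.+1) (i j : 'I_n.+1) : 'cV[R]_n :=
  \col_(a < n) X (lift i a) j.

(* For n+1 = 1 the minor is the
   0x0 matrix (trivially invertible) and this gives q = x_11. *)
Definition is_quasidet (R : pzRingType) (n : nat) (X : 'M[R]_n.+1)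
    (i j : 'I_n.+1) (q : R) : Prop :=
  exists Y : 'M[R]_n,
    minor_mx X i j *m Y = 1%:M /\ Y *m minor_mx X i j = 1%:M /\
    q = X i j - (qrow X i j *m Y *m qcol X i j) 0 0.

(* Theta_n = (phi^{(i+j-2)})_{1<=i,j<=n}; with 0-based indices phi^{(i+j)}. *)
Definition Theta (R : Type) (d : R -> R) (phi : R) (n : nat) : 'M[R]_n :=
  \matrix_(i < n, j < n) iter (i + j) d phi.

Definition theta_inv (R : unitRingType) (theta : nat -> R) (n : nat) : R :=
  if n is 0 then 0 else (theta n)^-1.

From HB Require Import structures.
From mathcomp Require Import all_boot all_order all_algebra.
Import GRing.Theory.
Local Open Scope ring_scope.
Set Implicit Arguments. Unset Strict Implicit.

(* If Y inverts its
   minor, the row P_m = (-r Y, 1) and the column Q_m = (-Y c, 1) satisfy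
   P_m Theta_{m+1} = (0, ..., 0, theta_{m+1}) = (Theta_{m+1} Q_m)^T.  The
   derivation shifts the Hankel columns by one, which gives two facts:
   - d P_{m+1} + theta_{m+2} theta_{m+1}^-1 P_m is a left null vector of
     Theta_{m+1}, hence zero;
   - differentiating theta_{m+1} = P_m Theta_{m+1} Q_m and eliminating the
     column phi^(m+1+j) with P_{m+1} gives
     theta_{m+1}' theta_{m+1}^-1 = P_m(m-1) - P_{m+1}(m).
   Differentiating the second fact with the first one (P_m(m) = 1) gives the
   theorem. *)

Section HankelDerivation.
Variables (R : pzRingType) (d : R -> R).
Hypothesis d_add : forall x y : R, d (x + y) = d x + d y.
Hypothesis d_mul : forall x y : R, d (x * y) = d x * y + x * d y.
Variable phi : R.

Local Notation h k := (iter k d phi).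

Lemma deriv0 : d 0 = 0.
Proof. by apply: (addrI (d 0)); rewrite -d_add !addr0. Qed.

Lemma deriv1 : d 1 = 0.
Proof.
have := d_mul 1 1; rewrite !mulr1 mul1r => d1E.
by apply: (addrI (d 1)); rewrite -d1E addr0.
Qed.

Lemma derivB x y : d (x - y) = d x - d y.
Proof. by have := d_add (x - y) y; rewrite subrK => ->; rewrite addrK. Qed.

Lemma deriv_sum n (F : 'I_n -> R) : d (\sum_(i < n) F i) = \sum_(i < n) d (F i).
Proof. exact: (big_morph d d_add deriv0). Qed.

Definition hankel_lcomb m (p : nat -> R) k := \sum_(j < m.+1) p j * h (j + k).
Definition hankel_rcomb m (q : nat -> R) j := \sum_(k < m.+1) h (j + k) * q k.

Definition qd_lvec m (p : nat -> R) (th : R) :=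
  [/\ p m = 1, forall k, (k < m)%N -> hankel_lcomb m p k = 0 & hankel_lcomb m p m = th].
Definition qd_rvec m (q : nat -> R) (th : R) :=
  [/\ q m = 1, forall j, (j < m)%N -> hankel_rcomb m q j = 0 & hankel_rcomb m q m = th].

Definition hankel_lfree m := forall c : nat -> R,
  (forall k, (k <= m)%N -> hankel_lcomb m c k = 0) -> forall j, (j <= m)%N -> c j = 0.

Lemma hankel_lcomb_recr m p k :
  hankel_lcomb m.+1 p k = hankel_lcomb m p k + p m.+1 * h (m.+1 + k).
Proof. by rewrite /hankel_lcomb big_ord_recr. Qed.

Lemma deriv_hankel_lcomb m p k :
  d (hankel_lcomb m p k) = hankel_lcomb m (fun j => d (p j)) k + hankel_lcomb m p k.+1.
Proof.
rewrite deriv_sum -big_split; apply: eq_bigr => j _.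
by rewrite d_mul addnS.
Qed.

Lemma hankel_lcomb_rcomb a b (p q : nat -> R) s :
  \sum_(k < b.+1) hankel_lcomb a p (s + k) * q k
  = \sum_(j < a.+1) p j * hankel_rcomb b q (s + j).
Proof.
under eq_bigr do rewrite mulr_suml.
rewrite exchange_big; apply: eq_bigr => j _; rewrite mulr_sumr.
by apply: eq_bigr => k _; rewrite mulrA addnCA addnA.
Qed.

Lemma qd_lvec_pair m p th (c : nat -> R) : qd_lvec m p th ->
  \sum_(k < m.+1) hankel_lcomb m p k * c k = th * c m.
Proof.
case=> _ p0 pth; rewrite big_ord_recr /= pth big1 ?add0r // => k _.
by rewrite p0 ?mul0r.
Qed.

Lemma qd_rvec_pair m q th (c : nat -> R) : qd_rvec m q th ->
  \sum_(j < m.+1) c j * hankel_rcomb m q j = c m * th.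
Proof.
case=> _ q0 qth; rewrite big_ord_recr /= qth big1 ?add0r // => j _.
by rewrite q0 ?mulr0.
Qed.

Lemma hankel_rcomb_next m q th p2 th2 : qd_rvec m q th -> qd_lvec m.+1 p2 th2 ->
  hankel_rcomb m q m.+1 = - (p2 m * th).
Proof.
move=> qv [p21 p20 _].
have := hankel_lcomb_rcomb m.+1 m p2 q 0.
rewrite big1 => [|k _]; last by rewrite add0n p20 ?mul0r.
rewrite big_ord_recr /= (qd_rvec_pair _ qv) p21 mul1r.
by move=> /esym/eqP; rewrite addrC addr_eq0 => /eqP.
Qed.

Lemma deriv_quasidet m (p q : nat -> R) (th : R) p2 th2 :
  qd_lvec m p th -> qd_rvec m q th -> qd_lvec m.+1 p2 th2 ->
  d th = ((if m is m'.+1 then p m' else 0) - p2 m) * th.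
Proof.
move=> pv qv p2v; have [p1 _ _] := pv; have [q1 q0 qth] := qv.
have thE : th = \sum_(k < m.+1) hankel_lcomb m p k * q k.
  by rewrite (qd_lvec_pair _ pv) q1 mulr1.
rewrite [in LHS]thE deriv_sum.
under eq_bigr do rewrite d_mul deriv_hankel_lcomb mulrDl.
rewrite !big_split /= (qd_lvec_pair (fun k => d (q k)) pv) q1 deriv1.
rewrite (hankel_lcomb_rcomb m m _ q 0) (qd_rvec_pair (fun j => d (p j)) qv).
rewrite p1 deriv1 mulr0 mul0r addr0 add0r.
rewrite (hankel_lcomb_rcomb m m p q 1) big_ord_recr /= p1 mul1r.
rewrite (hankel_rcomb_next qv p2v) mulrBl.
case: m {pv qv p2v thE p1 q1} q0 qth => [|m] q0 qth.
  by rewrite big_ord0 mul0r.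
rewrite big_ord_recr /= add1n qth big1 ?add0r // => j _.
by rewrite add1n q0 ?mulr0 // ltnS.
Qed.

Lemma deriv_qd_lvec m (p : nat -> R) th1 p' th0 (a : R) :
  qd_lvec m.+1 p th1 -> qd_lvec m p' th0 -> a * th0 = th1 -> hankel_lfree m ->
  forall j, (j <= m)%N -> d (p j) = - a * p' j.
Proof.
move=> [p1 p0 pth] [_ p'0 p'th] ath lfree j jm.
apply/eqP; rewrite -subr_eq0 mulNr opprK; apply/eqP.
apply: (lfree (fun j => d (p j) + a * p' j)) => // k km.
have -> : hankel_lcomb m (fun j => d (p j) + a * p' j) k
          = hankel_lcomb m (fun j => d (p j)) k + a * hankel_lcomb m p' k.
  rewrite /hankel_lcomb mulr_sumr -big_split.
  by apply: eq_bigr => i _; rewrite mulrDl mulrA.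
have := deriv_hankel_lcomb m.+1 p k.
rewrite p0 // deriv0 hankel_lcomb_recr p1 deriv1 mul0r addr0.
move=> /esym/eqP; rewrite addr_eq0 => /eqP ->.
case: ltngtP km => // [km _ | -> _].
  by rewrite p0 // p'0 // oppr0 mulr0 addr0.
by rewrite pth p'th ath addNr.
Qed.

Lemma minor_Theta_max m :
  minor_mx (Theta d phi m.+1) ord_max ord_max = Theta d phi m.
Proof. by apply/matrixP => i j; rewrite !mxE !lift_max. Qed.

Lemma qd_lvec_of_quasidet m th :
  is_quasidet (Theta d phi m.+1) ord_max ord_max th -> exists p, qd_lvec m p th.
Proof.
move=> [Y [_ [YT ->]]]; rewrite minor_Theta_max in YT.
set w := qrow _ _ _ *m Y.
have wT (k : 'I_m) : \sum_(i < m) w 0 i * h (i + k) = h (m + k).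
  set r := qrow (Theta d phi m.+1) ord_max ord_max.
  have wTk : (w *m Theta d phi m) 0 k = r 0 k by rewrite -mulmxA YT mulmx1.
  have -> : h (m + k) = r 0 k by rewrite !mxE lift_max.
  by rewrite -wTk mxE; apply: eq_bigr => i _; rewrite [Theta _ _ _ _ _]mxE.
exists (fun j => if insub j is Some i then - w 0 i else 1).
split; first by rewrite insubF // ltnn.
- move=> k km; rewrite /hankel_lcomb big_ord_recr /= insubF ?ltnn // mul1r.
  under eq_bigr => i _ do rewrite valK mulNr.
  by rewrite sumrN (wT (Ordinal km)) addNr.
- rewrite /hankel_lcomb big_ord_recr /= insubF ?ltnn // mul1r.
  under eq_bigr => i _ do rewrite valK mulNr.
  rewrite sumrN addrC !mxE; congr (_ - _).
  by apply: eq_bigr => i _; rewrite !mxE lift_max.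
Qed.

Lemma qd_rvec_of_quasidet m th :
  is_quasidet (Theta d phi m.+1) ord_max ord_max th -> exists q, qd_rvec m q th.
Proof.
move=> [Y [TY [_ ->]]]; rewrite minor_Theta_max in TY; rewrite -mulmxA.
set w := Y *m qcol _ _ _.
have Tw (j : 'I_m) : \sum_(i < m) h (j + i) * w i 0 = h (j + m).
  set c := qcol (Theta d phi m.+1) ord_max ord_max.
  have Twj : (Theta d phi m *m w) j 0 = c j 0 by rewrite mulmxA TY mul1mx.
  have -> : h (j + m) = c j 0 by rewrite !mxE lift_max.
  by rewrite -Twj mxE; apply: eq_bigr => i _; rewrite [Theta _ _ _ _ _]mxE.
exists (fun j => if insub j is Some i then - w i 0 else 1).
split; first by rewrite insubF // ltnn.
- move=> j jm; rewrite /hankel_rcomb big_ord_recr /= insubF ?ltnn // mulr1.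
  under eq_bigr => i _ do rewrite valK mulrN.
  by rewrite sumrN (Tw (Ordinal jm)) addNr.
- rewrite /hankel_rcomb big_ord_recr /= insubF ?ltnn // mulr1.
  under eq_bigr => i _ do rewrite valK mulrN.
  rewrite sumrN addrC !mxE; congr (_ - _).
  by apply: eq_bigr => i _; rewrite !mxE lift_max.
Qed.

Lemma hankel_lfree_of_quasidet m th :
  is_quasidet (Theta d phi m.+2) ord_max ord_max th -> hankel_lfree m.
Proof.
move=> [Y [TY _]] c c0 j jm; rewrite minor_Theta_max in TY.
have cT : \row_(i < m.+1) c i *m Theta d phi m.+1 = 0.
  apply/matrixP => a b; rewrite !mxE -[RHS](c0 b (ltn_ord b)).
  by apply: eq_bigr => i _; rewrite !mxE.
have : \row_(i < m.+1) c i = 0 by rewrite -[LHS]mulmx1 -TY mulmxA cT mul0mx.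
by move/matrixP/(_ 0 (Ordinal (jm : (j < m.+1)%N))); rewrite !mxE.
Qed.

Lemma deriv_qd_lvec_subleading m (p : nat -> R) th1 th0 (a : R) :
  is_quasidet (Theta d phi m.+2) ord_max ord_max th1 ->
  is_quasidet (Theta d phi m.+1) ord_max ord_max th0 ->
  a * th0 = th1 -> qd_lvec m.+1 p th1 -> d (p m) = - a.
Proof.
move=> qd1 qd0 ath pv; have [p' p'v] := qd_lvec_of_quasidet qd0.
rewrite (deriv_qd_lvec pv p'v ath (hankel_lfree_of_quasidet qd1) (leqnn m)).
by have [-> _ _] := p'v; rewrite mulr1.
Qed.

End HankelDerivation.

Theorem proposition4p11
  (F : fieldType) (hF : [pchar F] =i pred0)
  (R : unitAlgType F)
  (hdiv : forall x : R, x != 0 -> x \is a GRing.unit)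
  (d : R -> R)
  (d_add : forall x y : R, d (x + y) = d x + d y)
  (d_scale : forall (c : F) (x : R), d (c *: x) = c *: d x)
  (d_mul : forall x y : R, d (x * y) = d x * y + x * d y)
  (phi : R) (theta : nat -> R)
  (htheta : forall n : nat, is_quasidet (Theta d phi n.+1) ord_max ord_max (theta n.+1))
  (hunit : forall n : nat, (1 <= n)%N -> theta n \is a GRing.unit)
  (n : nat) (hn : (1 <= n)%N) :
  d (d (theta n) * (theta n)^-1)
    = theta n.+1 * (theta n)^-1 - theta n * theta_inv theta n.-1.
Proof.
case: n hn => [//|m] _ /=.
have [p pv] := qd_lvec_of_quasidet (htheta m).
have [q qv] := qd_rvec_of_quasidet (htheta m).
have [p2 p2v] := qd_lvec_of_quasidet (htheta m.+1).
have ratio k : theta k.+2 / theta k.+1 * theta k.+1 = theta k.+2.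
  exact: divrK (hunit k.+1 isT) _.
rewrite (deriv_quasidet d_add d_mul pv qv p2v) mulrK ?hunit // (derivB d_add).
rewrite (deriv_qd_lvec_subleading d_add d_mul (htheta m.+1) (htheta m) (ratio m) p2v).
case: m {q qv p2 p2v} p pv => [|m] p pv /=.
  by rewrite (deriv0 d_add) opprK add0r mulr0 subr0.
rewrite (deriv_qd_lvec_subleading d_add d_mul (htheta m.+1) (htheta m) (ratio m) pv).
by rewrite opprK addrC.
Qed.
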